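(* Let $\mathcal{X}$ be a connected $n$-premaniplex and let $(\mathcal{Y},\eta)$ be an $(n,m)$-voltage operator that preserves connectivity. Let $\gamma\in\operatorname{Aut}(\mathcal{X}\rtimes_\eta\mathcal{Y})$. If there exist a flag $(x_0,y_0)$ and a flag $x_1\in\mathcal{X}$ with $(x_0,y_0)\gamma=(x_1,y_0)$, then there is $\alpha\in\operatorname{Aut}(\mathcal{X})$ such that $(x,y)\gamma=(x\alpha,y)$ for all flags $(x,y)$ of $\mathcal{X}\rtimes_\eta\mathcal{Y}$.
   Context: An $n$-premaniplex is an edge-coloured graph (semi-edges and parallel edges allowed) with colours $\{0,\dots,n-1\}$ such that every vertex (flag) is the start of exactly one dart of each colour, and for $|i-j|\ge2$ alternating $i,j$-paths of length 4 are closed; $x^i$ is the $i$-adjacent flag of $x$. $\mathcal{C}^n=\langle r_0,\dots,r_{n-1}\mid r_i^2,\ (r_ir_j)^2\ (|i-j|\ge2)\rangle$ acts on flags by $r_ix=x^i$. Automorphisms (colour-preserving graph automorphisms) act on the right and commute with this action. For a flag $y$ of an $m$-premaniplex $\mathcal{Y}$ and $\omega\in\mathcal{C}^m$, $W_\omega(y)$ is the homotopy class of paths from $y$ whose colour sequence $i_1,\dots,i_k$ satisfies $r_{i_k}\cdots r_{i_1}=\omega$; these form the fundamental groupoid $\Pi(\mathcal{Y})$. A voltage assignment $\eta:\Pi(\mathcal{Y})\to\mathcal{C}^n$ satisfies $\eta(W_1W_2)=\eta(W_2)\eta(W_1)$; $(\mathcal{Y},\eta)$ is an $(n,m)$-voltage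 operator. $\mathcal{X}\rtimes_\eta\mathcal{Y}$ has flags $\mathcal{X}\times\mathcal{Y}$ and $(x,y)^i=(\eta(W_{r_i}(y))x,r_iy)$, $i\in\{0,\dots,m-1\}$; hence $\omega(x,y)=(\eta(W_\omega(y))x,\omega y)$. The operator preserves connectivity if $\mathcal{X}\rtimes_\eta\mathcal{Y}$ is connected whenever $\mathcal{X}$ is. Standing convention: $\mathcal{Y}$ has a spanning tree all of whose darts have trivial voltage. *)

From mathcomp Require Import all_boot.
From Stdlib Require Import Relation_Operators.
Set Implicit Arguments. Unset Strict Implicit. Unset Printing Implicit Defensive.

Definition far (k : nat) (i j : 'I_k) : bool := (i.+2 <= j) || (j.+2 <= i).

(* An n-premaniplex: a type of flags with, for each colour i < n, the
   i-adjacency map x |-> x^i.  "Exactly one dart of each colour at each flag"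
   (semi-edges = fixed points allowed) means adj i is an involution;
   alternating i,j-paths of length 4 (|i-j|>=2) are closed. *)
Record premaniplex (n : nat) := Premaniplex {
  flag :> Type;
  adj : 'I_n -> flag -> flag;
  adj_inv : forall i x, adj i (adj i x) = x;
  adj_alt : forall i j x, far i j -> adj j (adj i (adj j (adj i x))) = x
}.

(* Action of a path (colour sequence i_1,...,i_k, i_1 applied first), i.e.
   of the word r_{i_k} ... r_{i_1}, on flags. *)
Definition actw (F : Type) (k : nat) (r : 'I_k -> F -> F) (p : seq 'I_k) (x : F) : F :=
  foldl (fun z i => r i z) x p.

(* Equality in the Coxeter group C^k = < r_i | r_i^2, (r_i r_j)^2 (|i-j|>=2) >,
   on words written as colour sequences (path order). *)
Inductive coxstep (k : nat) : seq 'I_k -> seq 'I_k -> Prop :=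
| coxstep_sq (u v : seq 'I_k) (i : 'I_k) : coxstep (u ++ [:: i; i] ++ v) (u ++ v)
| coxstep_alt (u v : seq 'I_k) (i j : 'I_k) :
    far i j -> coxstep (u ++ [:: i; j; i; j] ++ v) (u ++ v).

Definition coxeq (k : nat) : seq 'I_k -> seq 'I_k -> Prop :=
  clos_refl_sym_trans (seq 'I_k) (@coxstep k).

Definition connected_fs (F : Type) (k : nat) (r : 'I_k -> F -> F) : Prop :=
  forall x x' : F, exists p : seq 'I_k, actw r p x = x'.

Definition connected (k : nat) (X : premaniplex k) : Prop := connected_fs (@adj k X).

(* Automorphism (acting on the right, x |-> x g): colour-preserving bijection. *)
Definition is_automorphism_fs (F : Type) (k : nat) (r : 'I_k -> F -> F) (g : F -> F) : Prop :=
  bijective g /\ forall i x, g (r i x) = r i (g x).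

Definition is_automorphism (k : nat) (X : premaniplex k) (g : X -> X) : Prop :=
  is_automorphism_fs (@adj k X) g.

(* A voltage assignment on the fundamental groupoid of Y: the homotopy class
   W_omega(y) of paths from y is determined by (y, omega), omega in C^m, and
   represented by any path p (colour sequence) with word omega.  The voltage
   eta y p is a word representing an element of C^n.  Conditions: eta is well
   defined on homotopy classes, and eta(W1 W2) = eta(W2) eta(W1)  (in path
   order: the voltage word of W1 followed by that of W2). *)
Definition voltage_assignment (n m : nat) (Y : premaniplex m)
    (eta : Y -> seq 'I_m -> seq 'I_n) : Prop :=
  (forall y p q, coxeq p q -> coxeq (eta y p) (eta y q)) /\
  (forall y p q, coxeq (eta y (p ++ q)) (eta y p ++ eta (actw (@adj m Y) p y) q)).

Definition vprod_adj (n m : nat) (X : premaniplex n) (Y : premaniplex m)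
    (eta : Y -> seq 'I_m -> seq 'I_n) (i : 'I_m) (xy : X * Y) : X * Y :=
  (actw (@adj n X) (eta xy.2 [:: i]) xy.1, adj i xy.2).
Arguments vprod_adj {n m} X {Y} eta i xy.

Definition preserves_connectivity (n m : nat) (Y : premaniplex m)
    (eta : Y -> seq 'I_m -> seq 'I_n) : Prop :=
  forall X : premaniplex n, connected X -> connected_fs (vprod_adj X eta).

(* Walks along darts from a set T of darts (dart = (flag, colour)). *)
Fixpoint walk_in (m : nat) (Y : premaniplex m) (T : Y -> 'I_m -> Prop)
    (y : Y) (p : seq 'I_m) : Prop :=
  match p with
  | [::] => True
  | i :: p' => T y i /\ walk_in T (adj i y) p'
  end.

(* T is (the dart set of) a spanning tree of Y: closed under reversal of
   darts, contains no semi-edge, connects all flags, and has no cycle (no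
   nonempty closed walk without backtracking).  Since each flag has exactly
   one dart of each colour, a walk is determined by its start and its colour
   sequence, and it backtracks iff two consecutive colours coincide. *)
Definition spanning_tree (m : nat) (Y : premaniplex m) (T : Y -> 'I_m -> Prop) : Prop :=
  [/\ (forall y i, T y i -> T (adj i y) i),
      (forall y i, T y i -> adj i y <> y),
      (forall y y', exists p, walk_in T y p /\ actw (@adj m Y) p y = y') &
      (forall y p, p <> [::] -> sorted (fun a b => a != b) p -> walk_in T y p ->
                   actw (@adj m Y) p y <> y)].

Definition trivial_spanning_tree (n m : nat) (Y : premaniplex m)
    (eta : Y -> seq 'I_m -> seq 'I_n) : Prop :=
  exists T : Y -> 'I_m -> Prop,
    spanning_tree T /\ forall y i, T y i -> coxeq (eta y [:: i]) [::].

(* The Cayley premaniplex of C^n is connected, so the connectivity-preserving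
   operator makes its product with Y connected.  Walking in that product from
   (1, y0) to (r_j, y0) yields, for every colour j, a closed walk at y0 whose
   voltage is r_j.  Since gamma maps the fibre over y0 into itself and commutes
   with closed walks at y0 (which act on that fibre through their voltages),
   its restriction to the fibre commutes with every r_j, i.e. it is an
   automorphism alpha of X.  Connectivity of X ⋊ Y then transports the identity
   gamma = alpha × id from the fibre over y0 to every fibre. *)
From mathcomp Require Import all_boot.
From Stdlib Require Import Relation_Operators.
From Stdlib Require Import FunctionalExtensionality PropExtensionality ProofIrrelevance.

Set Implicit Arguments.
Unset Strict Implicit.
Unset Printing Implicit Defensive.

Section Words.

Variable k : nat.
Implicit Types (p q w : seq 'I_k).

Lemma actw_cat (F : Type) (r : 'I_k -> F -> F) p q x :
  actw r (p ++ q) x = actw r q (actw r p x).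
Proof. by rewrite /actw foldl_cat. Qed.

Lemma actw_cons (F : Type) (r : 'I_k -> F -> F) i p x :
  actw r (i :: p) x = actw r p (r i x).
Proof. by []. Qed.

Lemma actw_commute (F : Type) (r : 'I_k -> F -> F) (g : F -> F) :
  (forall i x, g (r i x) = r i (g x)) ->
  forall p x, g (actw r p x) = actw r p (g x).
Proof. by move=> gr; elim=> [|i p IHp] x //; rewrite !actw_cons IHp gr. Qed.

Lemma coxeq_catr p q w : coxeq p q -> coxeq (p ++ w) (q ++ w).
Proof.
elim=> [a b ab | a | a b _ IH | a b c _ IH1 _ IH2].
- apply: rst_step; case: ab => [u v i | u v i j ij]; rewrite -!catA.
    exact: coxstep_sq.
  exact: coxstep_alt.
- exact: rst_refl.
- exact: rst_sym.
- exact: rst_trans IH2.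
Qed.

Lemma coxeq_cat_rev w : coxeq (w ++ rev w) [::].
Proof.
elim/last_ind: w => [|w i IHw]; first exact: rst_refl.
rewrite rev_rcons cat_rcons; apply: rst_trans IHw; apply: rst_step.
exact: (coxstep_sq w (rev w) i).
Qed.

Lemma coxeq_rev_cat w : coxeq (rev w ++ w) [::].
Proof. by have := coxeq_cat_rev (rev w); rewrite revK. Qed.

Lemma actw_coxeq (X : premaniplex k) p q :
  coxeq p q -> forall x : X, actw (@adj k X) p x = actw (@adj k X) q x.
Proof.
elim=> [a b ab | a | a b _ IH | a b c _ IH1 _ IH2] x //.
- case: ab => [u v i | u v i j ij]; rewrite !actw_cat !actw_cons /=.
    by rewrite adj_inv.
  by rewrite adj_alt.
- by rewrite IH1 IH2.
Qed.

End Words.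

Section Cayley.

Variable n : nat.
Implicit Types (v w : seq 'I_n).

(* C^n is modelled as the type of coxeq-classes, each class being the
   predicate [coxeq w] of one of its representatives. *)
Definition coxclass := {S : seq 'I_n -> Prop | exists w, S = coxeq w}.

Definition cls w : coxclass := exist _ (coxeq w) (ex_intro _ w erefl).

Lemma coxclass_ext (s t : coxclass) : sval s = sval t -> s = t.
Proof.
by case: s t => [S ?] [T ?] /= eST; subst T; congr exist; apply: proof_irrelevance.
Qed.

Lemma clsP v w : cls v = cls w <-> coxeq v w.
Proof.
split=> [/(congr1 sval) /= -> | vw]; first exact: rst_refl.
apply: coxclass_ext; apply: functional_extensionality => u.
apply: propositional_extensionality.
by split=> h; [apply: rst_trans (rst_sym _ _ _ _ vw) h | apply: rst_trans vw h].
Qed.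

Lemma coxclass_cls (s : coxclass) : exists w, s = cls w.
Proof. by case: s => S [w eSw]; exists w; apply: coxclass_ext. Qed.

Definition cadj_pred (i : 'I_n) (S : seq 'I_n -> Prop) : seq 'I_n -> Prop :=
  fun v => exists u, S u /\ coxeq (u ++ [:: i]) v.

Lemma cadj_pred_coxeq i w : cadj_pred i (coxeq w) = coxeq (w ++ [:: i]).
Proof.
apply: functional_extensionality => v; apply: propositional_extensionality.
split=> [[u [wu uiv]] | wiv]; first exact: rst_trans (coxeq_catr _ wu) uiv.
by exists w; split=> //; apply: rst_refl.
Qed.

Lemma cadj_subproof i (s : coxclass) : exists w, cadj_pred i (sval s) = coxeq w.
Proof.
by case: s => S [w /= ->]; exists (w ++ [:: i]); apply: cadj_pred_coxeq.
Qed.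

Definition cadj i (s : coxclass) : coxclass := exist _ _ (cadj_subproof i s).

Lemma cadj_cls i w : cadj i (cls w) = cls (w ++ [:: i]).
Proof. by apply: coxclass_ext; apply: cadj_pred_coxeq. Qed.

Lemma cadj_inv i s : cadj i (cadj i s) = s.
Proof.
have [w ->] := coxclass_cls s; rewrite !cadj_cls -catA; apply/clsP.
by apply: rst_step; have := coxstep_sq w [::] i; rewrite !cats0.
Qed.

Lemma cadj_alt i j s : far i j -> cadj j (cadj i (cadj j (cadj i s))) = s.
Proof.
move=> ij; have [w ->] := coxclass_cls s; rewrite !cadj_cls -!catA; apply/clsP.
by apply: rst_step; have := coxstep_alt w [::] ij; rewrite !cats0.
Qed.

Definition cayley : premaniplex n := Premaniplex cadj_inv cadj_alt.

Lemma actw_cls p w : actw (@adj n cayley) p (cls w) = cls (w ++ p).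
Proof.
by elim: p w => [|i p IHp] w; rewrite ?cats0 // actw_cons /= cadj_cls IHp -catA.
Qed.

Lemma cayley_connected : connected cayley.
Proof.
move=> s t; have [v ->] := coxclass_cls s; have [w ->] := coxclass_cls t.
exists (rev v ++ w); rewrite actw_cls catA; apply/clsP.
exact: coxeq_catr (coxeq_cat_rev v).
Qed.

End Cayley.

Section VoltageProduct.

Variables (n m : nat) (Y : premaniplex m) (eta : Y -> seq 'I_m -> seq 'I_n).

(* The voltage accumulated dart by dart along a walk, as X ⋊ Y does; it is
   coxeq to eta y p only when eta is a voltage assignment. *)
Fixpoint walk_voltage (y : Y) (p : seq 'I_m) : seq 'I_n :=
  if p is i :: p' then eta y [:: i] ++ walk_voltage (adj i y) p' else [::].

Lemma actw_vprod (X : premaniplex n) p (x : X) (y : Y) :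
  actw (vprod_adj X eta) p (x, y) =
    (actw (@adj n X) (walk_voltage y p) x, actw (@adj m Y) p y).
Proof. by elim: p x y => [|i p IHp] x y //; rewrite actw_cons IHp actw_cat. Qed.

Lemma closed_walk_of_voltage :
  preserves_connectivity eta ->
  forall (y : Y) (w : seq 'I_n),
    exists p, actw (@adj m Y) p y = y /\ coxeq (walk_voltage y p) w.
Proof.
move=> etaC y w.
have [p] := etaC _ (@cayley_connected n) (cls [::], y) (cls w, y).
rewrite actw_vprod actw_cls => -[pw py]; exists p; split=> //.
by rewrite pw; apply: rst_refl.
Qed.

End VoltageProduct.

Section FibrePreservingAutomorphism.

Variables (n m : nat) (X : premaniplex n) (Y : premaniplex m).
Variable eta : Y -> seq 'I_m -> seq 'I_n.
Hypothesis etaC : preserves_connectivity eta.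
Hypothesis connX : connected X.

Variable gamma : X * Y -> X * Y.
Hypothesis gamma_aut : is_automorphism_fs (vprod_adj X eta) gamma.
Variables (x0 x1 : X) (y0 : Y).
Hypothesis gamma_x0y0 : gamma (x0, y0) = (x1, y0).

Lemma gamma_actw p z :
  gamma (actw (vprod_adj X eta) p z) = actw (vprod_adj X eta) p (gamma z).
Proof. by apply: actw_commute; case: gamma_aut. Qed.

Lemma gamma_snd z : (gamma z).2 = z.2.
Proof.
have [p <-] := etaC connX (x0, y0) z.
by rewrite gamma_actw gamma_x0y0 !actw_vprod.
Qed.

Definition fibre_map (x : X) : X := (gamma (x, y0)).1.

Lemma gamma_fibre x : gamma (x, y0) = (fibre_map x, y0).
Proof. by rewrite [LHS]surjective_pairing gamma_snd. Qed.

Lemma fibre_map_closed_walk p x :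
  actw (@adj m Y) p y0 = y0 ->
  fibre_map (actw (@adj n X) (walk_voltage eta y0 p) x) =
    actw (@adj n X) (walk_voltage eta y0 p) (fibre_map x).
Proof.
move=> py0; have := gamma_actw p (x, y0).
by rewrite gamma_fibre !actw_vprod py0 gamma_fibre => -[].
Qed.

Lemma fibre_map_adj j x : fibre_map (adj j x) = adj j (fibre_map x).
Proof.
have [p [py0 pj]] := closed_walk_of_voltage etaC y0 [:: j].
by have := fibre_map_closed_walk x py0; rewrite !(actw_coxeq pj).
Qed.

Lemma fibre_map_bij : bijective fibre_map.
Proof.
case: gamma_aut => -[g' gK Kg] _.
exists (fun x => (g' (x, y0)).1) => x; first by rewrite -gamma_fibre gK.
have g'x : g' (x, y0) = ((g' (x, y0)).1, y0).
  by rewrite [LHS]surjective_pairing -(gamma_snd (g' (x, y0))) Kg.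
by rewrite /fibre_map -g'x Kg.
Qed.

Lemma gamma_fibre_map x y : gamma (x, y) = (fibre_map x, y).
Proof.
have [p] := etaC connX (x0, y0) (x0, y); rewrite actw_vprod => -[_ py].
set E := walk_voltage eta y0 p.
have xE : x = actw (@adj n X) E (actw (@adj n X) (rev E) x).
  by rewrite -actw_cat (actw_coxeq (coxeq_rev_cat E)).
rewrite [in LHS]xE -py -actw_vprod gamma_actw gamma_fibre actw_vprod py.
by rewrite -(actw_commute fibre_map_adj) -xE.
Qed.

End FibrePreservingAutomorphism.

Theorem proposition4p2 (n m : nat) (X : premaniplex n) (Y : premaniplex m)
    (eta : Y -> seq 'I_m -> seq 'I_n) :
  voltage_assignment eta ->
  trivial_spanning_tree eta ->
  preserves_connectivity eta ->
  connected X ->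
  forall gamma : X * Y -> X * Y,
    is_automorphism_fs (vprod_adj X eta) gamma ->
    (exists (x0 : X) (y0 : Y) (x1 : X), gamma (x0, y0) = (x1, y0)) ->
    exists alpha : X -> X,
      is_automorphism alpha /\ forall (x : X) (y : Y), gamma (x, y) = (alpha x, y).
Proof.
(* Preservation of connectivity alone suffices. *)
move=> _ _ etaC connX gamma gamma_aut [x0 [y0 [x1 gamma_x0y0]]].
exists (fibre_map gamma y0); split; first split.
- exact: (fibre_map_bij etaC connX gamma_aut gamma_x0y0).
- exact: (fibre_map_adj etaC connX gamma_aut gamma_x0y0).
- exact: (gamma_fibre_map etaC connX gamma_aut gamma_x0y0).
Qed.
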